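(* Let $\langle E,\rightarrow\rangle$ be a computation and $b$ a regular predicate, and let $S$ denote the slice of $\langle E,\rightarrow\rangle$ with respect to $b$. Then: (1) $\mathrm{possibly}(b)$ holds iff $S$ has at least two strongly connected components; (2) $\mathrm{invariant}(b)$ holds iff $S$ and $\langle E,\rightarrow\rangle$ have the same set of consistent cuts; (3) $\mathrm{controllable}(b)$ holds iff $S$ has the same number of strongly connected components as $\langle E,\rightarrow\rangle$.
   Context: A computation is a directed graph $\langle E, \rightarrow\rangle$ whose vertices (events) are partitioned among processes, each with an initial and final event, whose path relation contains Lamport's happened-before relation, with all initial events in one strongly connected component and all final events in one. A vertex subset $C$ is a consistent cut if for every edge $(u,v)$, $v\in C$ implies $u\in C$; $\emptyset$ and $E$ are trivial. A predicate is evaluated on non-trivial consistent cuts; it is regular if whenever consistent cuts $C_1,C_2$ satisfy it, so do $C_1\cap C_2$ and $C_1\cup C_2$. The slice with respect to $b$ is a directed graph on $E$ whose consistent cuts include every consistent cut of the computation satisfying $b$ and which has the fewest consistent cuts among all such graphs. Modalities: $\mathrm{possibly}(b)$ holds if some non-trivial consistent cut of the computation satisfies $b$; $\mathrm{invariant}(b)$ holds if every non-trivial consistent cut satisfies $b$; $\mathrm{controllable}(b)$ holds if there is a maximal chain $\emptyset=C_0\subset C_1\subset\dots\subset C_m=E$ in the lattice of consistent cuts of the computation (ordered by inclusion) such that every non-trivial $C_j$ satisfies $b$. *)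

From mathcomp Require Import all_boot.
Set Implicit Arguments. Unset Strict Implicit. Unset Printing Implicit Defensive.

Definition consistent (E : finType) (g : rel E) (C : {set E}) : bool :=
  [forall u, forall v, g u v ==> (v \in C) ==> (u \in C)].

Definition nontrivial (E : finType) (C : {set E}) : bool :=
  (C != set0) && (C != setT).

Definition cuts (E : finType) (g : rel E) : {set {set E}} :=
  [set C | consistent g C].

Definition scc_count (E : finType) (g : rel E) : nat :=
  #|[set [set y | connect g x y && connect g y x] | x : E]|.

Definition happened_before (E : finType) (lo msg : rel E) : rel E :=
  fun x y => connect (fun a b => lo a b || msg a b) x y.

(* ⟨E,e⟩ is a computation: events E partitioned among processes P via [proc];
   [lo] is the (strict, total on each process) process order; [msg] the message
   relation; [init p]/[fin p] the initial/final event of process p. *)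
Definition is_computation (E P : finType) (e : rel E) (proc : E -> P)
    (lo msg : rel E) (init fin : P -> E) : Prop :=
  [/\ (forall x y, lo x y -> proc x = proc y),
      (forall x, ~~ lo x x),
      (forall x y z, lo x y -> lo y z -> lo x z),
      (forall x y, proc x = proc y -> x != y -> lo x y || lo y x) &
      (forall x y, msg x y -> proc x != proc y)] /\
      ((forall x y, x != y -> happened_before lo msg x y ->
                   ~~ happened_before lo msg y x))
  /\ [/\
      (forall p, proc (init p) = p /\ forall x, proc x = p -> x != init p -> lo (init p) x),
      (forall p, proc (fin p) = p /\ forall x, proc x = p -> x != fin p -> lo x (fin p)),
      (forall x y, happened_before lo msg x y -> connect e x y),
      (forall p q, connect e (init p) (init q)) &
      (forall p q, connect e (fin p) (fin q))].

(* Predicates are evaluated on non-trivial consistent cuts. *)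
Definition regular (E : finType) (e : rel E) (b : {set E} -> Prop) : Prop :=
  forall C1 C2, consistent e C1 -> nontrivial C1 -> b C1 ->
                consistent e C2 -> nontrivial C2 -> b C2 ->
    (nontrivial (C1 :&: C2) -> b (C1 :&: C2)) /\
    (nontrivial (C1 :|: C2) -> b (C1 :|: C2)).

Definition retains (E : finType) (e : rel E) (b : {set E} -> Prop) (g : rel E) : Prop :=
  forall C, consistent e C -> nontrivial C -> b C -> consistent g C.

Definition is_slice (E : finType) (e : rel E) (b : {set E} -> Prop) (S : rel E) : Prop :=
  retains e b S /\
  forall g : rel E, retains e b g -> #|cuts S| <= #|cuts g|.

Definition possibly (E : finType) (e : rel E) (b : {set E} -> Prop) : Prop :=
  exists C, [/\ consistent e C, nontrivial C & b C].

Definition always_inv (E : finType) (e : rel E) (b : {set E} -> Prop) : Prop :=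
  forall C, consistent e C -> nontrivial C -> b C.

Definition cut_chain (E : finType) (e : rel E) (Q : {set {set E}}) : Prop :=
  Q \subset cuts e /\
  forall C D, C \in Q -> D \in Q -> (C \subset D) || (D \subset C).

Definition maximal_cut_chain (E : finType) (e : rel E) (Q : {set {set E}}) : Prop :=
  cut_chain e Q /\ forall Q', cut_chain e Q' -> Q \subset Q' -> Q' = Q.

Definition controllable (E : finType) (e : rel E) (b : {set E} -> Prop) : Prop :=
  exists Q, maximal_cut_chain e Q /\ forall C, C \in Q -> nontrivial C -> b C.

From mathcomp Require Import all_boot boolp.
Set Implicit Arguments. Unset Strict Implicit. Unset Printing Implicit Defensive.

(* By regularity, the cuts of [e] that satisfy [b] when non-trivial form a
   sublattice of the cuts of [e] containing [set0] and [setT]; any such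
   sublattice [L] is exactly the set of cuts of the graph with an edge [x -> y]
   whenever every member of [L] containing [y] contains [x], so it is the set
   of cuts of the slice.  The three claims then follow from two facts about an
   arbitrary finite graph: it has a non-trivial cut iff it has two strongly
   connected components, and each of its maximal chains of cuts has one element
   more than it has components, because consecutive cuts of a maximal chain
   differ by exactly one component. *)

Section ConsistentCuts.
Variables (E : finType) (g : rel E).
Implicit Types (C D M : {set E}) (Q : {set {set E}}) (x y : E).

Lemma consistentP C :
  reflect (forall u v, g u v -> v \in C -> u \in C) (consistent g C).
Proof.
apply: (iffP forallP) => [gC u v guv vC|gC u].
  by move/forallP: (gC u) => /(_ v); rewrite guv vC.
by apply/forallP => v; apply/implyP => /gC uC; apply/implyP.
Qed.

Lemma consistent0 : consistent g set0.
Proof. by apply/consistentP => u v _; rewrite inE. Qed.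

Lemma consistentT : consistent g setT.
Proof. by apply/consistentP => u v _; rewrite !inE. Qed.

Lemma consistentI C D : consistent g C -> consistent g D -> consistent g (C :&: D).
Proof.
move=> /consistentP gC /consistentP gD; apply/consistentP => u v guv.
by rewrite !inE => /andP[vC vD]; rewrite (gC _ _ guv vC) (gD _ _ guv vD).
Qed.

Lemma consistentU C D : consistent g C -> consistent g D -> consistent g (C :|: D).
Proof.
move=> /consistentP gC /consistentP gD; apply/consistentP => u v guv.
by rewrite !inE => /orP[/(gC _ _ guv)|/(gD _ _ guv)] ->; rewrite ?orbT.
Qed.

Lemma consistent_connect C u v : consistent g C -> connect g u v -> v \in C -> u \in C.
Proof.
move=> /consistentP gC /connectP[p + ->]; elim: p u => //= w p IHp u /andP[guw pw] vC.
exact: gC guw (IHp w pw vC).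
Qed.

Definition scc x := [set y | connect g x y && connect g y x].

Definition components := [set scc x | x : E].

Lemma mem_components x : scc x \in components.
Proof. exact: imset_f. Qed.

Lemma scc_refl x : x \in scc x.
Proof. by rewrite inE connect0. Qed.

Lemma scc_eq x y : y \in scc x -> scc y = scc x.
Proof.
rewrite inE => /andP[xy yx]; apply/setP => z; rewrite !inE.
by apply/andP/andP => -[zl zr]; split; apply: connect_trans; eassumption.
Qed.

Lemma consistent_scc C x : consistent g C -> x \in C -> scc x \subset C.
Proof.
move=> gC xC; apply/subsetP => y; rewrite inE => /andP[_ yx].
exact: consistent_connect gC yx xC.
Qed.

Definition down x := [set u | connect g u x].

Lemma consistent_down x : consistent g (down x).
Proof.
apply/consistentP => u v guv; rewrite !inE; apply: connect_trans.
exact: connect1.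
Qed.

Lemma exists_minimal (A : {set E}) x0 : x0 \in A ->
  exists2 x, x \in A & {in A, forall y, connect g y x -> connect g x y}.
Proof.
move=> Ax0; case: (arg_minnP (fun y => #|down y|) Ax0) => x Ax min_x.
exists x => // y Ay yx.
have down_yx : down y \subset down x.
  by apply/subsetP => u; rewrite !inE => uy; apply: connect_trans uy yx.
have /eqP down_y : down y == down x by rewrite eqEcard down_yx min_x.
suff: x \in down y by rewrite inE.
by rewrite down_y inE connect0.
Qed.

Lemma scc_count_gt1 : 1 < scc_count g <-> exists C, consistent g C && nontrivial C.
Proof.
split=> [/card_gt1P[_ [_ [/imsetP[y1 _ ->] /imsetP[y2 _ ->] neq_scc]]]|].
  have [x _ min_x] := exists_minimal (in_setT y1).
  exists (down x); rewrite consistent_down /= /nontrivial.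
  apply/andP; split; first by apply/set0Pn; exists x; rewrite inE connect0.
  apply: contra neq_scc => /eqP downT.
  have scc_x y : scc y = scc x.
    have yx : connect g y x by have := in_setT y; rewrite -downT inE.
    by apply: scc_eq; rewrite inE yx min_x.
  by apply/eqP; apply: etrans (scc_x y1) (esym (scc_x y2)).
move=> [C /andP[gC /andP[C0 CT]]].
have [x xC] := set0Pn _ C0.
have /properP[_ [y _ yC]] : C \proper setT by rewrite properT.
apply/card_gt1P; exists (scc x), (scc y); rewrite !imset_f //; split=> //.
apply: contraNneq yC => scc_xy; apply: (subsetP (consistent_scc gC xC)).
by rewrite scc_xy scc_refl.
Qed.

Definition rank C := #|[set K in components | K \subset C]|.

Lemma rank0 : rank set0 = 0.
Proof.
apply/eqP; rewrite cards_eq0 -subset0; apply/subsetP => _ /setIdP[/imsetP[x _ ->]].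
by move/subsetP/(_ x (scc_refl x)); rewrite inE.
Qed.

Lemma rankT : rank setT = #|components|.
Proof. by apply: eq_card => K; rewrite inE subsetT andbT. Qed.

Lemma rank_le C : rank C <= #|components|.
Proof. by apply/subset_leq_card/subsetP => K /setIdP[]. Qed.

Lemma rank_lt C D : consistent g D -> C \proper D -> rank C < rank D.
Proof.
move=> gD /properP[CD [x xD xC]]; apply/proper_card/properP; split.
  by apply/subsetP => K /setIdP[K_comp KC]; rewrite inE K_comp (subset_trans KC CD).
exists (scc x); first by rewrite inE mem_components consistent_scc.
by rewrite inE mem_components /=; apply: contra xC => /subsetP; apply; apply: scc_refl.
Qed.

Lemma rank_gap C D : consistent g C -> C \subset D -> (rank C).+1 < rank D ->
  exists x y, [/\ x \in D :\: C, y \in D :\: C & scc x != scc y].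
Proof.
move=> gC CD; rewrite /rank; set KC := [set K in _ | _]; set KD := [set K in _ | _].
have KCD : KC \subset KD.
  by apply/subsetP => K /setIdP[K_comp KC']; rewrite inE K_comp (subset_trans KC' CD).
move=> gap; have /card_gt1P[K1 [K2 [K1D K2D neqK]]] : 1 < #|KD :\: KC|.
  by rewrite cardsDS // ltn_subRL addn1.
have scc_point K : K \in KD :\: KC -> exists2 x, x \in D :\: C & K = scc x.
  move=> /setDP[/setIdP[/imsetP[x _ ->] xD] KnC].
  exists x => //; rewrite inE (subsetP xD x (scc_refl x)) andbT.
  by apply: contra KnC => xC; rewrite inE mem_components consistent_scc.
have [[x1 x1DC eq1] [x2 x2DC eq2]] := (scc_point _ K1D, scc_point _ K2D).
by exists x1, x2; rewrite -eq1 -eq2.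
Qed.

(* The inserted cut is [C] together with everything below a minimal point of
   [D :\: C]; it misses some point of [D :\: C] because that set meets two
   components. *)
Lemma consistent_between C D : consistent g C -> consistent g D -> C \subset D ->
  (rank C).+1 < rank D -> exists M, [/\ consistent g M, C \proper M & M \proper D].
Proof.
move=> gC gD CD /(rank_gap gC CD)[x1 [x2 [x1DC x2DC neq_scc]]].
have [x xDC min_x] := exists_minimal x1DC.
move: (xDC); rewrite inE => /andP[xC xD].
have downD : down x \subset D.
  by apply/subsetP => u; rewrite inE => ux; apply: consistent_connect gD ux xD.
exists (C :|: down x); split; first exact: consistentU (consistent_down x).
  by apply/properP; split; [apply: subsetUl | exists x; rewrite // !inE connect0 orbT].
rewrite properEneq subUset CD downD !andbT; apply: contraNneq neq_scc => DM.
have scc_x y : y \in D :\: C -> scc y = scc x.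
  move=> yDC; have := yDC; rewrite inE -DM !inE => /andP[/negbTE-> /= yx].
  by apply: scc_eq; rewrite inE yx min_x.
by rewrite (scc_x _ x1DC) (scc_x _ x2DC).
Qed.

Definition cut_chainb Q :=
  (Q \subset cuts g) && [forall C in Q, forall D in Q, (C \subset D) || (D \subset C)].

Lemma cut_chainP Q : reflect (cut_chain g Q) (cut_chainb Q).
Proof.
apply: (iffP andP) => -[sQ cQ]; split=> //.
  by move=> C D CQ DQ; move/forall_inP: cQ => /(_ C CQ)/forall_inP; apply.
by apply/forall_inP => C CQ; apply/forall_inP => D DQ; apply: cQ.
Qed.

Lemma exists_maximal_cut_chain : exists Q, maximal_cut_chain g Q.
Proof.
have chain0 : cut_chainb set0 by apply/cut_chainP; split=> [|C D]; rewrite ?sub0set ?inE.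
case: (arg_maxnP (fun Q => #|Q|) chain0) => Q /cut_chainP chQ maxQ.
exists Q; split=> // Q' /cut_chainP chQ' QQ'.
by apply/eqP; rewrite eq_sym eqEcard QQ'; apply: maxQ.
Qed.

Lemma maximal_cut_chain_mem Q C : maximal_cut_chain g Q -> consistent g C ->
  {in Q, forall D, (C \subset D) || (D \subset C)} -> C \in Q.
Proof.
move=> [[sQ cQ] maxQ] gC comparable_C.
suff <- : C |: Q = Q by rewrite setU11.
apply: maxQ; last exact: subsetUr.
split; first by apply/subsetP => D; rewrite !inE => /predU1P[->|/(subsetP sQ)]; rewrite ?inE.
move=> D F /setU1P[->|DQ] /setU1P[->|FQ].
- by rewrite subxx.
- exact: comparable_C.
- by rewrite orbC comparable_C.
- exact: cQ.
Qed.

Lemma maximal_cut_chain0 Q : maximal_cut_chain g Q -> set0 \in Q.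
Proof. by move/maximal_cut_chain_mem; apply=> [|D _]; rewrite ?consistent0 ?sub0set. Qed.

Lemma maximal_cut_chainT Q : maximal_cut_chain g Q -> setT \in Q.
Proof.
by move/maximal_cut_chain_mem; apply=> [|D _]; rewrite ?consistentT ?subsetT ?orbT.
Qed.

Lemma cut_chain_card Q : cut_chain g Q -> #|Q| <= (scc_count g).+1.
Proof.
move=> [sQ cQ]; rewrite cardE -(size_map rank) -(size_iota 0 (scc_count g).+1).
apply: uniq_leq_size => [|_ /mapP[C _ ->]]; last by rewrite mem_iota ltnS rank_le.
rewrite map_inj_in_uniq ?enum_uniq // => C D; rewrite !mem_enum => CQ DQ.
wlog CD : C D CQ DQ / C \subset D.
  move=> wlog eq_rank; have [CD|DC] := orP (cQ C D CQ DQ); first exact: wlog.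
  exact/esym/wlog.
move=> eq_rank; have [//|neqCD] := eqVneq C D.
have gD : consistent g D by move/(subsetP sQ): DQ; rewrite inE.
have CpD : C \proper D by rewrite properEneq neqCD.
by have := rank_lt gD CpD; rewrite eq_rank ltnn.
Qed.

(* The successor of [C] in [Q] is its smallest proper superset in [Q]; a gap of
   two ranks would leave room for a new cut, against maximality. *)
Lemma maximal_cut_chain_succ Q C : maximal_cut_chain g Q -> C \in Q -> C != setT ->
  exists2 D, D \in Q & rank D = (rank C).+1.
Proof.
move=> Qmax CQ CT; have [[sQ cQ] _] := Qmax.
have consistent_Q F : F \in Q -> consistent g F by move/(subsetP sQ); rewrite inE.
have candidate : (setT \in Q) && (C \proper setT).
  by rewrite maximal_cut_chainT // properT.
case: (arg_minnP (P := fun F => (F \in Q) && (C \proper F)) (fun F => #|F|) candidate).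
move=> D /andP[DQ CD] minD; exists D => //.
have between F : F \in Q -> (F \subset C) || (D \subset F).
  move=> FQ; have [->//|CF] := orP (cQ F C FQ CQ).
  have [<-|neqCF] := eqVneq C F; first by rewrite subxx.
  have [->|FD] := orP (cQ D F DQ FQ); first by rewrite orbT.
  have CpF : C \proper F by rewrite properEneq neqCF.
  by rewrite (eqP (_ : F == D)) ?subxx ?orbT // eqEcard FD minD ?FQ.
apply/eqP; rewrite eqn_leq rank_lt ?consistent_Q // andbT leqNgt; apply/negP => gap.
have [M [gM CM MD]] :=
  consistent_between (consistent_Q C CQ) (consistent_Q D DQ) (proper_sub CD) gap.
have MQ : M \in Q.
  apply: maximal_cut_chain_mem Qmax gM _ => F /between/orP[FC|DF].
    by rewrite (subset_trans FC (proper_sub CM)) orbT.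
  by rewrite (subset_trans (proper_sub MD) DF).
by case/orP: (between M MQ) => [MC|DM]; [move: CM|move: MD]; rewrite properE ?MC ?DM andbF.
Qed.

Lemma maximal_cut_chain_card Q : maximal_cut_chain g Q -> #|Q| = (scc_count g).+1.
Proof.
move=> Qmax; apply/eqP; rewrite eqn_leq (cut_chain_card Qmax.1) /=.
have rank_hit i : i <= scc_count g -> exists2 C, C \in Q & rank C = i.
  elim: i => [_|i IHi lt_i]; first by exists set0; rewrite ?rank0 ?maximal_cut_chain0.
  have [C CQ rankC] := IHi (ltnW lt_i).
  have CT : C != setT by apply: contraTneq lt_i => CT; rewrite -rankC CT rankT ltnn.
  by have [D DQ rankD] := maximal_cut_chain_succ Qmax CQ CT; exists D; rewrite -?rankC.
rewrite cardE -(size_map rank) -(size_iota 0 (scc_count g).+1).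
rewrite uniq_leq_size ?iota_uniq // => i.
by rewrite mem_iota ltnS => /rank_hit[C CQ <-]; rewrite map_f ?mem_enum.
Qed.

Lemma cut_chain_maximal Q :
  cut_chain g Q -> #|Q| = (scc_count g).+1 -> maximal_cut_chain g Q.
Proof.
move=> chQ cardQ; split=> // Q' chQ' QQ'.
by apply/eqP; rewrite eq_sym eqEcard QQ' cardQ cut_chain_card.
Qed.

End ConsistentCuts.

Lemma cut_chain_sub (E : finType) (g h : rel E) (Q : {set {set E}}) :
  {subset cuts g <= cuts h} -> cut_chain g Q -> cut_chain h Q.
Proof. by move=> gh [sQ cQ]; split=> //; apply/subsetP => C /(subsetP sQ)/gh. Qed.

Lemma maximal_cut_chain_sub (E : finType) (g h : rel E) (Q : {set {set E}}) :
  {subset cuts g <= cuts h} -> Q \subset cuts g ->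
  maximal_cut_chain h Q -> maximal_cut_chain g Q.
Proof.
move=> gh sQ [[_ cQ] maxQ]; split=> // Q' /(cut_chain_sub gh); exact: maxQ.
Qed.

Section FamilyRelation.
Variables (E : finType) (L : {set {set E}}).

Definition family_rel : rel E := fun x y => [forall D in L, (y \in D) ==> (x \in D)].

Hypotheses (L0 : set0 \in L) (LT : setT \in L).
Hypotheses (LI : {in L &, forall C D, C :&: D \in L}).
Hypotheses (LU : {in L &, forall C D, C :|: D \in L}).

Lemma cuts_family_rel : cuts family_rel = L.
Proof.
apply/setP => C; rewrite inE; apply/idP/idP => [/consistentP fC|CL]; last first.
  by apply/consistentP => u v /forall_inP/(_ C CL)/implyP.
pose J y := \bigcap_(D in L | y \in D) D.
have JL y : J y \in L by apply: (big_ind (fun X => X \in L)) => // D /andP[].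
suff -> : C = \bigcup_(y in C) J y by apply: (big_ind (fun X => X \in L)).
apply/setP => z; apply/idP/bigcupP => [zC|[y yC /bigcapP zJ]].
  by exists z => //; apply/bigcapP => D /andP[].
apply: fC yC; apply/forall_inP => D DL; apply/implyP => yD.
by apply: zJ; rewrite DL.
Qed.

End FamilyRelation.

Lemma nontrivialN (E : finType) (C : {set E}) : ~~ nontrivial C -> C = set0 \/ C = setT.
Proof. by rewrite negb_and !negbK => /orP[] /eqP; [left|right]. Qed.

Definition b_cut (E : finType) (e : rel E) (b : {set E} -> Prop) (C : {set E}) :=
  consistent e C /\ (nontrivial C -> b C).

Section Slice.
Variables (E : finType) (e : rel E) (b : {set E} -> Prop).
Hypothesis b_regular : regular e b.
Implicit Types C D : {set E}.

Lemma b_cut0 : b_cut e b set0.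
Proof. by split; [apply: consistent0 | rewrite /nontrivial eqxx]. Qed.

Lemma b_cutT : b_cut e b setT.
Proof. by split; [apply: consistentT | rewrite /nontrivial eqxx andbF]. Qed.

Lemma b_cutI C D : b_cut e b C -> b_cut e b D -> b_cut e b (C :&: D).
Proof.
move=> [eC bC] [eD bD]; split; first exact: consistentI.
have [nC|/nontrivialN[]->] := boolP (nontrivial C); last 2 first.
- by rewrite set0I /nontrivial eqxx.
- by rewrite setTI.
have [nD|/nontrivialN[]->] := boolP (nontrivial D); last 2 first.
- by rewrite setI0 /nontrivial eqxx.
- by rewrite setIT.
exact: (b_regular eC nC (bC nC) eD nD (bD nD)).1.
Qed.

Lemma b_cutU C D : b_cut e b C -> b_cut e b D -> b_cut e b (C :|: D).
Proof.
move=> [eC bC] [eD bD]; split; first exact: consistentU.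
have [nC|/nontrivialN[]->] := boolP (nontrivial C); last 2 first.
- by rewrite set0U.
- by rewrite setTU /nontrivial eqxx andbF.
have [nD|/nontrivialN[]->] := boolP (nontrivial D); last 2 first.
- by rewrite setU0.
- by rewrite setUT /nontrivial eqxx andbF.
exact: (b_regular eC nC (bC nC) eD nD (bD nD)).2.
Qed.

Lemma consistent_slice (S : rel E) :
  is_slice e b S -> forall C, consistent S C <-> b_cut e b C.
Proof.
move=> [S_retains S_fewest] C.
pose L := [set D | `[< b_cut e b D >]].
have b_cutL D : (D \in L) = `[< b_cut e b D >] by rewrite inE.
have L_S : L \subset cuts S.
  apply/subsetP => D; rewrite b_cutL inE => /asboolP[eD bD].
  have [nD|/nontrivialN[]->] := boolP (nontrivial D).
  - exact: S_retains eD nD (bD nD).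
  - exact: consistent0.
  - exact: consistentT.
have L_cuts : cuts (family_rel L) = L.
  apply: cuts_family_rel => [||C1 C2|C1 C2]; rewrite ?b_cutL.
  - exact/asboolP/b_cut0.
  - exact/asboolP/b_cutT.
  - by move=> /asboolP bC1 /asboolP bC2; apply/asboolP; apply: b_cutI.
  - by move=> /asboolP bC1 /asboolP bC2; apply/asboolP; apply: b_cutU.
have cuts_S : cuts S = L.
  apply/eqP; rewrite eq_sym eqEcard L_S -L_cuts; apply: S_fewest => D eD nD bD.
  have : D \in cuts (family_rel L) by rewrite L_cuts b_cutL; apply/asboolP.
  by rewrite inE.
have -> : consistent S C = (C \in L) by rewrite -cuts_S inE.
by rewrite b_cutL; apply: iff_sym; apply: rwP; apply: asboolP.
Qed.

End Slice.

Theorem theorem12 (E P : finType) (e : rel E) (proc : E -> P) (lo msg : rel E)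
    (init fin : P -> E) (b : {set E} -> Prop) (S : rel E) :
  is_computation e proc lo msg init fin ->
  regular e b ->
  is_slice e b S ->
  [/\ possibly e b <-> 1 < scc_count S,
      always_inv e b <-> cuts S = cuts e &
      controllable e b <-> scc_count S = scc_count e].
Proof.
move=> _ b_regular S_slice.
have sliceP := consistent_slice b_regular S_slice.
have cuts_S_e : {subset cuts S <= cuts e} by move=> C; rewrite !inE => /sliceP[].
split.
- rewrite scc_count_gt1; split=> [[C [eC nC bC]]|[C /andP[/sliceP[eC bC] nC]]].
    by exists C; rewrite nC andbT; apply/sliceP.
  by exists C; split=> //; apply: bC.
- split=> [b_inv|cutsE C eC nC].
    apply/setP => C; rewrite !inE; apply/idP/idP => [/sliceP[] //|eC].
    by apply/sliceP; split=> // nC; apply: b_inv.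
  have : C \in cuts S by rewrite cutsE inE.
  by rewrite inE => /sliceP[_]; apply.
- split=> [[Q [Qmax Qb]]|sccE].
    have QS : Q \subset cuts S.
      apply/subsetP => C CQ; rewrite inE; apply/sliceP; split; last exact: Qb.
      by move/(subsetP Qmax.1.1): CQ; rewrite inE.
    have QmaxS := maximal_cut_chain_sub cuts_S_e QS Qmax.
    by apply: succn_inj; rewrite -(maximal_cut_chain_card Qmax) (maximal_cut_chain_card QmaxS).
  have [Q [chQ maxQ]] := exists_maximal_cut_chain S.
  exists Q; split.
    apply: cut_chain_maximal; first exact: cut_chain_sub chQ.
    by rewrite -sccE (maximal_cut_chain_card (conj chQ maxQ)).
  by move=> C /(subsetP chQ.1); rewrite inE => /sliceP[].
Qed.
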